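(* Let $A,Y\in\{0,1\}$ and let $R,R'\in[0,1]$ be random variables on the same probability space, with $\Pr\{A=a,Y=y\}>0$ for all $a,y$. Fix $a\in\{0,1\}$. Then for any point $p$ on the $A$-conditional ROC curve $\{C_a^R(t):t\in[0,1]\}$ of $R$, there is a point $q$ on the corresponding $A$-conditional ROC curve $\{C_a^{R'}(t):t\in[0,1]\}$ of $R'$ such that $\|p-q\|_2\le\sqrt{2}\cdot d_{\mathrm{K}}(R,R')$.
   Context: For a score $S\in[0,1]$ and $a\in\{0,1\}$, the $A$-conditional ROC curve is $C_a^S(t)=\left(\Pr\{S>t\mid A=a,Y=0\},\ \Pr\{S>t\mid A=a,Y=1\}\right)$, $t\in[0,1]$. The conditional Kolmogorov distance is $d_{\mathrm{K}}(R,R')=\max_{a,y\in\{0,1\}}\sup_{t\in[0,1]}\left|\Pr\{R>t\mid A=a,Y=y\}-\Pr\{R'>t\mid A=a,Y=y\}\right|$. *)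

From HB Require Import structures.
From mathcomp Require Import all_boot all_order all_algebra.
From mathcomp Require Import all_classical all_reals all_analysis.
Set Implicit Arguments. Unset Strict Implicit. Unset Printing Implicit Defensive.
Import Order.TTheory GRing.Theory Num.Theory.
Import numFieldNormedType.Exports.
Local Open Scope classical_set_scope.
Local Open Scope ring_scope.

Definition evAY {T : Type} (A Y : T -> bool) (a y : bool) : set T :=
  [set x | A x = a /\ Y x = y].

Definition cprob_gt {d : measure_display} {T : measurableType d} {R : realType}
  (P : probability T R) (A Y : T -> bool) (S : T -> R) (t : R) (a y : bool) : R :=
  fine (P ([set x | t < S x] `&` evAY A Y a y)) / fine (P (evAY A Y a y)).

Definition roc {d : measure_display} {T : measurableType d} {R : realType}
  (P : probability T R) (A Y : T -> bool) (S : T -> R) (a : bool) (t : R) : R * R :=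
  (cprob_gt P A Y S t a false, cprob_gt P A Y S t a true).

Definition sup_diff {d : measure_display} {T : measurableType d} {R : realType}
  (P : probability T R) (A Y : T -> bool) (S S' : T -> R) (a y : bool) : R :=
  sup [set r : R | exists2 t : R, t \in `[0, 1] &
        r = `|cprob_gt P A Y S t a y - cprob_gt P A Y S' t a y| ].

Definition dK {d : measure_display} {T : measurableType d} {R : realType}
  (P : probability T R) (A Y : T -> bool) (S S' : T -> R) : R :=
  Num.max (Num.max (sup_diff P A Y S S' false false) (sup_diff P A Y S S' false true))
          (Num.max (sup_diff P A Y S S' true false) (sup_diff P A Y S S' true true)).

Definition dist2 {R : realType} (p q : R * R) : R :=
  Num.sqrt ((p.1 - q.1) ^+ 2 + (p.2 - q.2) ^+ 2).

From HB Require Import structures.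
From mathcomp Require Import all_boot all_order all_algebra.
From mathcomp Require Import all_classical all_reals all_analysis.
From mathcomp Require Import lra.
Import Order.TTheory GRing.Theory Num.Theory.
Import numFieldNormedType.Exports.
Local Open Scope classical_set_scope.
Local Open Scope ring_scope.

(* Compare p = C_a^R(t) with q := C_a^{R'}(t) at the same threshold t.  Each
   coordinate of p - q is a difference of conditional tail probabilities at a
   threshold in [0, 1], hence bounded in absolute value by d_K(R, R'); a
   vector of R^2 with both coordinates bounded by e has length at most
   sqrt 2 * e. *)

Section finite_measure_ratio.
Context {d} {T : measurableType d} {R : realType}.
Variable mu : {finite_measure set T -> \bar R}.

Lemma fine_measureI_div_ge0 (E B : set T) :
  0 <= fine (mu (E `&` B)) / fine (mu B).
Proof. by rewrite divr_ge0 // fine_ge0. Qed.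

(* No positivity of [mu B] is needed: if [fine (mu B) = 0] the ratio is 0. *)
Lemma fine_measureI_div_le1 (E B : set T) : measurable E -> measurable B ->
  fine (mu (E `&` B)) / fine (mu B) <= 1.
Proof.
move=> mE mB.
have mEB : measurable (E `&` B) by exact: measurableI.
have EB_le_B : fine (mu (E `&` B)) <= fine (mu B).
  by rewrite fine_le ?fin_num_measure // le_measure // inE.
have [->|B_neq0] := eqVneq (fine (mu B)) 0; first by rewrite invr0 mulr0.
by rewrite ler_pdivrMr ?mul1r // lt0r B_neq0 fine_ge0.
Qed.

End finite_measure_ratio.

Section conditional_tail.
Context {d} {T : measurableType d} {R : realType}.
Variable P : probability T R.
Context {A Y : T -> bool}.
Hypothesis mA : forall b : bool, measurable [set x | A x = b].
Hypothesis mY : forall b : bool, measurable [set x | Y x = b].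

Lemma measurable_evAY a y : measurable (evAY A Y a y).
Proof. exact: (measurableI _ _ (mA a) (mY y)). Qed.

Lemma cprob_gt_itv {S : T -> R} : measurable_fun setT S ->
  forall t a y, 0 <= cprob_gt P A Y S t a y <= 1.
Proof.
move=> mS t a y; apply/andP; split; first exact: fine_measureI_div_ge0.
apply: fine_measureI_div_le1; last exact: measurable_evAY.
rewrite -[X in measurable X]setTI -preimage_itvoy.
exact: mS (measurable_itv _).
Qed.

Lemma le_sup_diff {S S' : T -> R} {t} a y :
  measurable_fun setT S -> measurable_fun setT S' -> t \in `[0, 1] ->
  `|cprob_gt P A Y S t a y - cprob_gt P A Y S' t a y| <= sup_diff P A Y S S' a y.
Proof.
move=> mS mS' t01; apply: ub_le_sup; last by exists t.
exists 1 => _ [u _ ->].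
have /andP[S_ge0 S_le1] := cprob_gt_itv mS u a y.
have /andP[S'_ge0 S'_le1] := cprob_gt_itv mS' u a y.
by rewrite ler_norml; apply/andP; split; lra.
Qed.

End conditional_tail.

Lemma sup_diff_le_dK {d} {T : measurableType d} {R : realType}
    (P : probability T R) (A Y : T -> bool) (S S' : T -> R) a y :
  sup_diff P A Y S S' a y <= dK P A Y S S'.
Proof. by rewrite /dK; case: a; case: y; rewrite !le_max lexx ?orbT. Qed.

Lemma dist2_le_sqrt2 {R : realType} (p q : R * R) (e : R) :
  `|p.1 - q.1| <= e -> `|p.2 - q.2| <= e -> dist2 p q <= Num.sqrt 2 * e.
Proof.
move=> le1 le2; have e_ge0 : 0 <= e := le_trans (normr_ge0 _) le1.
have sqr_le u : `|u| <= e -> u ^+ 2 <= e ^+ 2.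
  by move=> le_ue; rewrite -real_normK ?num_real // lerXn2r ?nnegrE.
have -> : Num.sqrt 2 * e = Num.sqrt (2 * e ^+ 2).
  by rewrite sqrtrM ?ler0n // sqrtr_sqr ger0_norm.
by apply: ler_wsqrtr; rewrite mulr_natl mulr2n lerD ?sqr_le.
Qed.

Theorem lemma5p5 (d : measure_display) (T : measurableType d) (R : realType)
  (P : probability T R) (A Y : T -> bool) (S S' : T -> R)
  (mA : forall b : bool, measurable [set x | A x = b])
  (mY : forall b : bool, measurable [set x | Y x = b])
  (mS : measurable_fun setT S) (mS' : measurable_fun setT S')
  (S01 : forall x, S x \in `[0, 1]) (S'01 : forall x, S' x \in `[0, 1])
  (pos : forall a y : bool, (0 < P (evAY A Y a y))%E)
  (a : bool) (p : R * R) :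
  (exists2 t : R, t \in `[0, 1] & p = roc P A Y S a t) ->
  exists2 q : R * R, (exists2 t' : R, t' \in `[0, 1] & q = roc P A Y S' a t') &
    dist2 p q <= Num.sqrt 2 * dK P A Y S S'.
Proof.
move=> [t t01 ->]; exists (roc P A Y S' a t); first by exists t.
have coord_le y : `|cprob_gt P A Y S t a y - cprob_gt P A Y S' t a y|
    <= dK P A Y S S'.
  exact: le_trans (le_sup_diff P mA mY a y mS mS' t01) (sup_diff_le_dK P A Y S S' a y).
by apply: dist2_le_sqrt2; apply: coord_le.
Qed.
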